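(* Let $n,m\ge 1$, let $G\in\mathbb{R}^{2n\times 2n}$ be symmetric, let $C\in\mathbb{R}^{2m\times 2n}$, set $A=\Sigma_n(G+C^\top\Sigma_m C/2)$, and let $\mathcal{C}=(\Sigma_n C^\top\Sigma_m, A\Sigma_n C^\top\Sigma_m,\ldots,A^{2n-1}\Sigma_n C^\top\Sigma_m)$ and $\mathcal{O}=(C^\top, A^\top C^\top,\ldots,(A^\top)^{2n-1}C^\top)^\top$. Then the linear quantum system determined by $(G,C)$ has a decoherence-free (DF) subsystem if and only if $$\mathrm{Ker}(\mathcal{O})\cap\mathrm{Ker}(\mathcal{O}\Sigma_n)\neq\{0\}.$$ Moreover, in that case there always exists a real $2n\times 2\ell$ matrix $T_1$ ($\ell\ge1$) with $\mathrm{Range}(T_1)=\mathrm{Ker}(\mathcal{O})\cap\mathrm{Ker}(\mathcal{O}\Sigma_n)$ and $T_1^\top\Sigma_n T_1=\Sigma_\ell$, and $\hat x_{\rm DF}=T_1^\top\hat x$ is a DF mode.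
   Context: For $k\ge1$, $\Sigma_k=\mathrm{diag}\{\Sigma,\ldots,\Sigma\}$ ($2k\times 2k$) with $\Sigma=\begin{pmatrix}0&1\\-1&0\end{pmatrix}$. The linear quantum system determined by $(G,C)$ is $d\hat x=A\hat x\,dt+\Sigma_nC^\top\Sigma_m\,d\hat{\mathcal W}$ with output $d\hat{\mathcal W}^{\rm out}=C\hat x\,dt+d\hat{\mathcal W}$, where $\hat x=(\hat q_1,\hat p_1,\ldots,\hat q_n,\hat p_n)^\top$ satisfies the canonical commutation relation $\hat x\hat x^\top-(\hat x\hat x^\top)^\top=i\Sigma_n$, $\hat{\mathcal W}$ is the vector of input noise quadratures and $\hat{\mathcal W}^{\rm out}$ that of the output. Definition: the system has a DF subsystem if there is a subsystem, with variable $\hat x_{\rm DF}=T^\top\hat x$ for a real matrix $T$ with nonzero columns, that is (i) uncontrollable with respect to $\hat{\mathcal W}$ and unobservable with respect to $\hat{\mathcal W}^{\rm out}$, i.e. the columns of $T$ lie in $\mathrm{Ker}(\mathcal{C}^\top)\cap\mathrm{Ker}(\mathcal{O})$ (equivalently $\mathrm{Ker}(\mathcal{C}^\top)\cap\mathrm{Ker}(\mathcal{O})$ is nontrivial), and (ii) whose variable satisfies the canonical commutation relation, i.e. $T^\top\Sigma_nT=\Sigma_\ell$ for some $\ell\ge1$; such $\hat x_{\rm DF}$ is called a DF mode. *)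

From HB Require Import structures.
From mathcomp Require Import all_boot all_order all_algebra.
Set Implicit Arguments. Unset Strict Implicit. Unset Printing Implicit Defensive.
Import Order.TTheory GRing.Theory Num.Theory.
Local Open Scope ring_scope.

Section DF.
Variable R : realFieldType.

(* Sigma_k = diag{Sigma,...,Sigma} (2k x 2k), Sigma = [[0,1],[-1,0]] *)
Definition Sigma (k : nat) : 'M[R]_(2 * k) :=
  \matrix_(i, j)
    (if ~~ odd i && (j == i.+1 :> nat) then 1
     else if odd i && (j.+1 == i :> nat) then -1 else 0).

Variables n m : nat.

Definition Amat (G : 'M[R]_(2 * n)) (C : 'M[R]_(2 * m, 2 * n)) : 'M[R]_(2 * n) :=
  Sigma n *m (G + 2^-1 *: (C^T *m Sigma m *m C)).

Definition ctrb (G : 'M[R]_(2 * n)) (C : 'M[R]_(2 * m, 2 * n))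
  : 'M[R]_(2 * n, \sum_(k < 2 * n) 2 * m) :=
  \mxrow_(k < 2 * n) (Amat G C ^+ k *m Sigma n *m C^T *m Sigma m).

Definition obs (G : 'M[R]_(2 * n)) (C : 'M[R]_(2 * m, 2 * n))
  : 'M[R]_(\sum_(k < 2 * n) 2 * m, 2 * n) :=
  \mxcol_(k < 2 * n) ((((Amat G C)^T ^+ k) *m C^T)^T).

(* x_DF = T^T x is a DF mode: T has nonzero columns, its columns lie in
   Ker(ctrb^T) /\ Ker(obs), and T^T Sigma_n T = Sigma_l. *)
Definition is_DF_mode (G : 'M[R]_(2 * n)) (C : 'M[R]_(2 * m, 2 * n))
  (l : nat) (T : 'M[R]_(2 * n, 2 * l)) : Prop :=
  [/\ (forall j, col j T != 0),
      (ctrb G C)^T *m T = 0,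
      obs G C *m T = 0 &
      T^T *m Sigma n *m T = Sigma l].

Definition has_DF_subsystem (G : 'M[R]_(2 * n)) (C : 'M[R]_(2 * m, 2 * n)) : Prop :=
  exists l, (0 < l)%N /\ exists T : 'M[R]_(2 * n, 2 * l), is_DF_mode G C T.

End DF.

From HB Require Import structures.
From mathcomp Require Import all_boot all_order all_algebra.
From mathcomp Require Import zify lra.
Set Implicit Arguments. Unset Strict Implicit. Unset Printing Implicit Defensive.
Import Order.TTheory GRing.Theory Num.Theory.
Local Open Scope ring_scope.

(* Write J := Sigma_n and O := obs G C.  As G is symmetric, J A^T = A' J with
   A' := -A + (J C^T Sigma_m) C, an output injection of -A; output injection
   does not change the unobservable subspace, hence Ker (ctrb^T) = Ker (O J)
   and the DF vectors are exactly those of S := Ker O /\ Ker (O J).  Since J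
   is orthogonal and skew, S is J-stable and u J u^T = 0.  A Gram-Schmidt
   process that picks a nonzero x in S, keeps the pair (x, x J) and recurses
   on the part of S orthogonal to both therefore produces a basis of S in
   which the Gram matrix of (u, v) |-> u J v^T is Sigma_l. *)

Lemma trmxX (R : comPzRingType) d k (M : 'M[R]_d) : (M ^+ k)^T = M^T ^+ k.
Proof.
elim: k => [|k IHk]; first by rewrite !expr0 trmx1.
by rewrite exprS -mulmxE trmx_mul IHk exprSr.
Qed.

Lemma mxcol_mul_eq0 (R : pzRingType) K (p_ : 'I_K -> nat) n q
    (B_ : forall i, 'M[R]_(p_ i, n)) (Y : 'M[R]_(n, q)) :
  \mxcol_i B_ i *m Y = 0 <-> forall i, B_ i *m Y = 0.
Proof.
rewrite mxcol_mul; split => [BY0 i | BY0].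
  by have := congr1 (fun M => submxcol M i) BY0; rewrite mxcolK submxcol0.
by apply/mxcolP => i; rewrite mxcolK submxcol0 BY0.
Qed.

Lemma row_unitmx_neq0 (F : fieldType) n (A : 'M[F]_n) i :
  A \in unitmx -> row i A != 0.
Proof.
move=> Au; apply: contraTneq isT => Ai0.
have := row1 F i; rewrite -(mulmxV Au) row_mul Ai0 mul0mx => e0.
by have /matrixP/(_ 0 i) := e0; rewrite !mxE !eqxx => /esym/eqP; rewrite oner_eq0.
Qed.

Lemma obs_output_injection (R : comPzRingType) d q p N (c : R)
    (A B : 'M[R]_d) (K : 'M[R]_(d, q)) (C : 'M[R]_(q, d)) (Y : 'M[R]_(d, p)) :
  B = c *: A + K *m C ->
  (forall k : 'I_N, C *m A ^+ k *m Y = 0) -> forall k : 'I_N, C *m B ^+ k *m Y = 0.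
Proof.
move=> -> CAY0.
have BkY k : (k < N)%N -> (c *: A + K *m C) ^+ k *m Y = c ^+ k *: (A ^+ k *m Y).
  elim: k => [|k IHk] ltkN; first by rewrite !expr0 scale1r.
  have CAkY : C *m (A ^+ k *m Y) = 0 by rewrite mulmxA (CAY0 (Ordinal (ltnW ltkN))).
  rewrite exprS -mulmxE -mulmxA IHk ?(ltnW ltkN) // -scalemxAr mulmxDl -!mulmxA.
  by rewrite CAkY mulmx0 addr0 -scalemxAl scalerA -exprSr mulmxA mulmxE -exprS.
by move=> k; rewrite -mulmxA BkY // -scalemxAr mulmxA CAY0 scaler0.
Qed.

Definition partner (i : nat) : nat := if odd i then i.-1 else i.+1.

Lemma eq_partner i j : (j == partner i) = (i./2 == j./2) && (odd i != odd j).
Proof.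
rewrite /partner; have := odd_double_half i; have := odd_double_half j.
rewrite -!muln2; case: (odd i); case: (odd j) => /= hj hi;
  apply/eqP/idP => [?|/eqP ?]; lia.
Qed.

Lemma partnerK : involutive partner.
Proof.
by move=> i; rewrite /partner; case: i => [|i] //=; case oi: (odd i); rewrite /= ?oi.
Qed.

Lemma partner_lt k i : (i < 2 * k)%N -> (partner i < 2 * k)%N.
Proof.
rewrite /partner; have := odd_double_half i; rewrite -muln2.
by case: (odd i) => /= hi; lia.
Qed.

Section SigmaMatrix.
Variable R : realFieldType.

Lemma SigmaE k (i j : 'I_(2 * k)) :
  Sigma R k i j = (if odd i then -1 else 1) * (j == partner i :> nat)%:R.
Proof.
rewrite mxE /partner; case oi: (odd i) => /=; last by rewrite mul1r; case: eqP.
have -> : (j.+1 == i :> nat) = (j == i.-1 :> nat).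
  by move: oi; case: (nat_of_ord i) => //= i' _; rewrite eqSS.
by case: eqP; rewrite ?mulr1 ?mulr0.
Qed.

Lemma tr_Sigma k : (Sigma R k)^T = - Sigma R k.
Proof.
apply/matrixP => i j; rewrite [LHS]mxE [RHS]mxE !SigmaE !eq_partner.
rewrite (eq_sym (j./2)) (eq_sym (odd j)).
by case: (odd i); case: (odd j); rewrite /= ?andbF ?mulr0 ?oppr0 ?mulN1r ?opprK ?mul1r.
Qed.

Lemma Sigma_mulmx_tr k : Sigma R k *m (Sigma R k)^T = 1%:M.
Proof.
apply/matrixP => i j; rewrite mxE (bigD1 (Ordinal (partner_lt (ltn_ord i)))) //=.
rewrite big1 => [|t /negbTE t_ni]; last by rewrite SigmaE (_ : _ == _ = false) ?mulr0 ?mul0r.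
rewrite addr0 [X in _ * X]mxE !SigmaE eqxx mulr1 (inj_eq (can_inj partnerK)) (inj_eq val_inj) [RHS]mxE.
by case: eqP => [->|_]; case: (odd j); rewrite ?eqxx ?mulr0 ?mulNr ?mulrN ?opprK ?mulr1.
Qed.

Lemma Sigma_unitmx k : Sigma R k \in unitmx.
Proof. by case: (mulmx1_unit (Sigma_mulmx_tr k)). Qed.

Lemma Sigma_sqr k : Sigma R k *m Sigma R k = - 1%:M.
Proof. by rewrite -[X in _ *m X]opprK -tr_Sigma mulmxN Sigma_mulmx_tr. Qed.

End SigmaMatrix.

Section DotProduct.
Variable R : realFieldType.

Definition dot N (u v : 'rV[R]_N) : R := (u *m v^T) 0 0.

Lemma dotE N (u v : 'rV[R]_N) : dot u v = \sum_k u 0 k * v 0 k.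
Proof. by rewrite /dot mxE; apply: eq_bigr => k _; rewrite mxE. Qed.

Lemma dotC N (u v : 'rV[R]_N) : dot u v = dot v u.
Proof. by rewrite !dotE; apply: eq_bigr => k _; rewrite mulrC. Qed.

Lemma dotDl N (u w v : 'rV[R]_N) : dot (u + w) v = dot u v + dot w v.
Proof. by rewrite !dotE -big_split; apply: eq_bigr => k _; rewrite mxE mulrDl. Qed.

Lemma dotZl N a (u v : 'rV[R]_N) : dot (a *: u) v = a * dot u v.
Proof. by rewrite !dotE mulr_sumr; apply: eq_bigr => k _; rewrite mxE mulrA. Qed.

Lemma dotNl N (u v : 'rV[R]_N) : dot (- u) v = - dot u v.
Proof. by rewrite -scaleN1r dotZl mulN1r. Qed.

Lemma dotBl N (u w v : 'rV[R]_N) : dot (u - w) v = dot u v - dot w v.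
Proof. by rewrite dotDl dotNl. Qed.

Lemma dotZr N a (u v : 'rV[R]_N) : dot u (a *: v) = a * dot u v.
Proof. by rewrite dotC dotZl dotC. Qed.

Lemma dot_gt0 N (u : 'rV[R]_N) : u != 0 -> 0 < dot u u.
Proof.
move=> u_neq0; rewrite dotE lt_def sumr_ge0 ?andbT => [|k _]; last first.
  by rewrite -expr2 sqr_ge0.
apply: contra u_neq0 => /eqP /psumr_eq0P u0; apply/eqP/rowP => k.
by apply/eqP; rewrite mxE -sqrf_eq0 expr2 u0 // => j _; rewrite -expr2 sqr_ge0.
Qed.

Lemma dot_row_mulmx_tr p q r (A : 'M[R]_(p, r)) (B : 'M[R]_(q, r)) i j :
  (A *m B^T) i j = dot (row i A) (row j B).
Proof. by rewrite dotE !mxE; apply: eq_bigr => k _; rewrite !mxE. Qed.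

Lemma mx11_eq0 (a : 'M[R]_1) : (a == 0) = (a 0 0 == 0).
Proof. by rewrite [a]mx11_scalar -scalemx1 scalemx_eq0 oner_eq0 orbF !mxE eqxx mulr1. Qed.

End DotProduct.

Section SymplecticBasis.
Variables (R : realFieldType) (N : nat) (J : 'M[R]_N).
Hypotheses (J_skew : J^T = - J) (J_orth : J *m J^T = 1%:M).

Lemma dot_mulJr (u v : 'rV[R]_N) : dot u (v *m J) = - dot (u *m J) v.
Proof. by rewrite /dot trmx_mul J_skew mulNmx mulmxN mulmxA [LHS]mxE. Qed.

Lemma dot_mulJ (u v : 'rV[R]_N) : dot (u *m J) (v *m J) = dot u v.
Proof. by rewrite /dot trmx_mul mulmxA -(mulmxA u) J_orth mulmx1. Qed.

Lemma dot_mulJ_id (u : 'rV[R]_N) : dot u (u *m J) = 0.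
Proof. by have := dot_mulJr u u; rewrite [dot (u *m J) u]dotC => h; lra. Qed.

Lemma mulmxJJ (u : 'rV[R]_N) : u *m J *m J = - u.
Proof.
have JJ : J *m J = - 1%:M by rewrite -[X in _ *m X]opprK -J_skew mulmxN J_orth.
by rewrite -mulmxA JJ mulmxN mulmx1.
Qed.

Definition J_orthogonal_basis (S : 'M[R]_N) l (x : nat -> 'rV[R]_N) :=
  [/\ forall i, (i < l)%N -> (x i <= S)%MS /\ x i != 0,
      forall i j, (i < l)%N -> (j < l)%N -> i != j -> dot (x i) (x j) = 0,
      forall i j, (i < l)%N -> (j < l)%N -> dot (x i) (x j *m J) = 0 &
      (S <= \sum_(i < l) (x i + x i *m J))%MS].

Definition Jperp (S : 'M[R]_N) (x : 'rV[R]_N) :=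
  (S :&: kermx (col_mx x (x *m J))^T)%MS.

Lemma sub_Jperp S x (u : 'rV[R]_N) :
  (u <= Jperp S x)%MS = [&& (u <= S)%MS, dot u x == 0 & dot u (x *m J) == 0].
Proof.
by rewrite sub_capmx sub_kermx tr_col_mx mul_mx_row row_mx_eq0 !mx11_eq0.
Qed.

Lemma Jperp_stable S x : stablemx S J -> stablemx (Jperp S x) J.
Proof.
move=> SJ; apply/row_subP => i; rewrite row_mul.
have := row_sub i (Jperp S x); rewrite sub_Jperp => /and3P[uS /eqP ux /eqP uxJ].
have uJx : dot (row i (Jperp S x) *m J) x = 0.
  by rewrite dotC dot_mulJr dotC uxJ oppr0.
by rewrite sub_Jperp (submx_trans (submxMr J uS) SJ) dot_mulJ ux uJx eqxx.
Qed.

Lemma J_orthogonal_basis_cons S x l (y : nat -> 'rV[R]_N) :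
    stablemx S J -> (x <= S)%MS -> x != 0 -> J_orthogonal_basis (Jperp S x) l y ->
  J_orthogonal_basis S l.+1 (fun i => if i is i'.+1 then y i' else x).
Proof.
move=> SJ xS x_neq0 [y_sub y_orth y_Jorth Sy].
have y_perp i : (i < l)%N ->
    [/\ (y i <= S)%MS, dot (y i) x = 0 & dot (y i) (x *m J) = 0].
  by move=> /y_sub[]; rewrite sub_Jperp => /and3P[? /eqP ? /eqP ?].
have xJS : (x *m J <= S)%MS := submx_trans (submxMr J xS) SJ.
split.
- case=> [|i] //=; rewrite ltnS => ltil.
  by have [yS _ _] := y_perp i ltil; have [_ ->] := y_sub i ltil.
- case=> [|i] [|j] //=; rewrite ?ltnS => lti ltj ij.
  + by have [_ yx _] := y_perp j ltj; rewrite dotC.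
  + by have [_ yx _] := y_perp i lti.
  + exact: y_orth.
- case=> [|i] [|j] //=; rewrite ?ltnS => lti ltj.
  + exact: dot_mulJ_id.
  + by have [_ _ yxJ] := y_perp j ltj; rewrite dot_mulJr dotC yxJ oppr0.
  + by have [_ _ yxJ] := y_perp i lti.
  + exact: y_Jorth.
rewrite big_ord_recl /=; apply/rV_subP => u uS.
have xx_neq0 : dot x x != 0 by rewrite gt_eqF ?dot_gt0.
set a := dot u x / dot x x; set b := dot u (x *m J) / dot x x.
have -> : u = (a *: x + b *: (x *m J)) + (u - (a *: x + b *: (x *m J))).
  by rewrite addrC subrK.
apply: addmx_sub_adds.
  by rewrite addmx_sub_adds ?scalemx_sub.
apply: submx_trans Sy; rewrite sub_Jperp !dotBl !dotDl !dotZl.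
rewrite [dot (x *m J) x]dotC dot_mulJ dot_mulJ_id /a /b !mulfVK // !mulr0 addr0 add0r.
by rewrite !subrr eqxx addmx_sub ?eqmx_opp ?addmx_sub ?scalemx_sub.
Qed.

Lemma J_orthogonal_basis_exists S :
  stablemx S J -> exists l x, J_orthogonal_basis S l x.
Proof.
move: {2}(\rank S) (leqnn (\rank S)) => k; elim: k S => [|k IHk] S rankS SJ;
  have [-> | S_neq0] := eqVneq S 0;
  try by exists 0%N, (fun=> 0); split; rewrite ?sub0mx.
  by move: S_neq0; rewrite -mxrank_eq0 -leqn0 rankS.
have x_neq0 : nz_row S != 0 by rewrite nz_row_eq0.
have xS := nz_row_sub S.
have Jperp_lt : (Jperp S (nz_row S) < S)%MS.
  rewrite ltmxE capmxSl /=; apply/negP => SJperp.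
  have := submx_trans xS SJperp; rewrite sub_Jperp => /and3P[_ /eqP xx0 _].
  by have := dot_gt0 x_neq0; rewrite xx0 ltxx.
have [|l [y y_basis]] := IHk _ _ (Jperp_stable (nz_row S) SJ).
  by rewrite -ltnS (leq_trans (rank_ltmx Jperp_lt)).
by exists l.+1, (fun i => if i is i'.+1 then y i' else nz_row S);
  apply: J_orthogonal_basis_cons.
Qed.

Lemma symplectic_basis (S : 'M[R]_N) : stablemx S J ->
  exists l (T : 'M[R]_(2 * l, N)), (T == S)%MS /\ T *m J *m T^T = Sigma R l.
Proof.
move=> SJ; have [l [x [x_sub x_orth x_Jorth Sx]]] := J_orthogonal_basis_exists SJ.
pose c i := dot (x i) (x i).
have c_neq0 i : (i < l)%N -> c i != 0.
  by move=> /x_sub[_ xi_neq0]; rewrite gt_eqF ?dot_gt0.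
(* [x_i] and [x_i J] have the same norm [c i]; without square roots the
   normalisation is carried by the odd rows alone. *)
pose e p := if odd p then (c p./2)^-1 *: (x p./2 *m J) else x p./2.
pose T := \matrix_(p < 2 * l) e p.
have rowT p : row p T = e p by rewrite rowK.
have half_lt (p : 'I_(2 * l)) : (p./2 < l)%N.
  by have := odd_double_half p; have := ltn_ord p; rewrite -muln2; lia.
exists l, T; split.
  apply/andP; split.
    apply/row_subP => p; have [xS _] := x_sub _ (half_lt p).
    by rewrite rowT /e; case: odd; rewrite ?scalemx_sub ?(submx_trans (submxMr J xS)).
  apply: submx_trans Sx _; apply/sumsmx_subP => i _; have lti := ltn_ord i.
  have ev : (i.*2 < 2 * l)%N by rewrite -muln2; lia.
  have od : (i.*2.+1 < 2 * l)%N by rewrite -muln2; lia.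
  have xiJ : x i *m J = c i *: row (Ordinal od) T.
    by rewrite rowT /e /= odd_double uphalf_double scalerA mulfV ?scale1r ?c_neq0.
  have xi : x i = row (Ordinal ev) T by rewrite rowT /e /= odd_double doubleK.
  by rewrite addsmx_sub xiJ xi scalemx_sub row_sub.
apply/matrixP => p q; rewrite dot_row_mulmx_tr row_mul !rowT /e.
rewrite SigmaE eq_partner; have ltp := half_lt p; have ltq := half_lt q.
case: (odd p); case: (odd q); rewrite /= ?andbF ?mulr0.
- rewrite -!scalemxAl mulmxJJ dotZl dotZr dotNl x_Jorth //.
  by rewrite oppr0 !mulr0.
- rewrite -scalemxAl mulmxJJ dotZl dotNl mulN1r mulrN.
  by have [<-|ne] := eqVneq; rewrite ?mulVf ?c_neq0 ?x_orth ?mulr0.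
- rewrite dotZr dot_mulJ mul1r.
  by have [<-|ne] := eqVneq; rewrite ?mulVf ?c_neq0 ?x_orth ?mulr0.
- by rewrite dotC x_Jorth.
Qed.

End SymplecticBasis.

Section DecoherenceFree.
Variables (R : realFieldType) (n m : nat).
Variables (G : 'M[R]_(2 * n)) (C : 'M[R]_(2 * m, 2 * n)).
Hypothesis G_sym : G^T = G.
Local Notation J := (Sigma R n).
Local Notation A := (Amat G C).
Local Notation O := (obs G C).

Definition Amat_inj := - A + (J *m C^T *m Sigma R m) *m C.

Lemma Sigma_trAmat : J *m A^T = Amat_inj *m J.
Proof.
set H := C^T *m Sigma R m *m C.
have H_skew : H^T = - H.
  by rewrite /H !trmx_mul trmxK tr_Sigma mulNmx mulmxN mulmxA.
have halfH : H = 2^-1 *: H + 2^-1 *: H.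
  by rewrite -scalerDl -mulr2n -[_ *+ 2]mulr_natl mulfV ?scale1r ?pnatr_eq0.
set M := G + 2^-1 *: H.
have trM : M^T = M - H.
  rewrite /M raddfD /= linearZ /= G_sym H_skew scalerN.
  by rewrite {3}halfH opprD addrA addrK.
rewrite /Amat_inj /Amat -/H -/M trmx_mul trM tr_Sigma -(mulmxA J C^T) -(mulmxA J) -/H.
by rewrite !mulmxN mulmxBl mulmxBr opprB [RHS]mulmxDl mulNmx !mulmxA addrC.
Qed.

Lemma Sigma_trAmatX k : J *m A^T ^+ k = Amat_inj ^+ k *m J.
Proof.
elim: k => [|k IHk]; first by rewrite !expr0 mulmx1 mul1mx.
by rewrite !exprS -!mulmxE mulmxA Sigma_trAmat -!mulmxA IHk.
Qed.

Lemma obs_mul_eq0 p (Y : 'M[R]_(2 * n, p)) :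
  O *m Y = 0 <-> forall k : 'I_(2 * n), C *m A ^+ k *m Y = 0.
Proof.
have blk k : (A^T ^+ k *m C^T)^T = C *m A ^+ k.
  by rewrite trmx_mul trmxK trmxX trmxK.
by rewrite /obs mxcol_mul_eq0; split => Y0 k; have := Y0 k; rewrite blk.
Qed.

Lemma tr_ctrb_mul_eq0 p (X : 'M[R]_(2 * n, p)) :
  (ctrb G C)^T *m X = 0 <-> forall k : 'I_(2 * n), C *m J *m A^T ^+ k *m X = 0.
Proof.
have blk k : (A ^+ k *m J *m C^T *m Sigma R m)^T *m X
    = Sigma R m *m (C *m J *m A^T ^+ k *m X).
  by rewrite 3!trmx_mul trmxX !tr_Sigma trmxK !mulNmx !mulmxN mulNmx opprK !mulmxA.
rewrite /ctrb tr_mxrow mxcol_mul_eq0; split => X0 k; have := X0 k; rewrite blk.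
  by move/(congr1 (mulmx (invmx (Sigma R m)))); rewrite mulKmx ?Sigma_unitmx ?mulmx0.
by move=> ->; rewrite mulmx0.
Qed.

Lemma tr_ctrb_mul_eq0_obs p (X : 'M[R]_(2 * n, p)) :
  (ctrb G C)^T *m X = 0 <-> O *m J *m X = 0.
Proof.
have CJAX k : C *m J *m A^T ^+ k *m X = C *m Amat_inj ^+ k *m (J *m X).
  by rewrite -(mulmxA C) Sigma_trAmatX !mulmxA.
rewrite tr_ctrb_mul_eq0 -mulmxA obs_mul_eq0.
split => [CJAX0 | CAX0 k]; last first.
  by rewrite CJAX; apply: (obs_output_injection (c := -1) _ CAX0 k); rewrite scaleN1r.
apply: (obs_output_injection (c := -1) (A := Amat_inj) (K := J *m C^T *m Sigma R m)).
  by rewrite scaleN1r /Amat_inj opprD opprK subrK.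
by move=> k; rewrite -CJAX.
Qed.

Definition df_space := kermx (row_mx O^T (O *m J)^T).

Lemma sub_df_space p (X : 'M[R]_(p, 2 * n)) :
  (X <= df_space)%MS = (O *m X^T == 0) && (O *m J *m X^T == 0).
Proof.
rewrite sub_kermx mul_mx_row row_mx_eq0.
by rewrite -[X *m O^T == 0]trmx_eq0 -[X *m _^T == 0]trmx_eq0 !trmx_mul !trmxK.
Qed.

Lemma df_space_stable : stablemx df_space J.
Proof.
have := submx_refl df_space; rewrite !sub_df_space => /andP[/eqP OS /eqP OJS].
rewrite trmx_mul tr_Sigma mulNmx !mulmxN !mulmxA OJS oppr0 eqxx /=.
by rewrite -(mulmxA O) Sigma_sqr mulmxN mulmx1 mulNmx OS oppr0 oppr0.
Qed.

Lemma sub_df_spaceP (u : 'cV[R]_(2 * n)) :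
  (u^T <= df_space)%MS <-> O *m u = 0 /\ O *m J *m u = 0.
Proof.
rewrite sub_df_space !trmxK.
by split => [/andP[/eqP -> /eqP ->] | [-> ->]]; rewrite ?eqxx.
Qed.

Lemma df_mode_of_kernel (v : 'cV[R]_(2 * n)) :
  v != 0 -> O *m v = 0 -> O *m J *m v = 0 ->
  exists l : nat, (0 < l)%N /\
    exists T1 : 'M[R]_(2 * n, 2 * l),
      [/\ (forall u : 'cV[R]_(2 * n),
             (exists w : 'cV[R]_(2 * l), u = T1 *m w) <-> O *m u = 0 /\ O *m J *m u = 0),
          T1^T *m J *m T1 = Sigma R l &
          is_DF_mode G C T1].
Proof.
move=> v_neq0 Ov OJv.
have [l [T [/andP[T_df df_T] TJT]]] :=
  symplectic_basis (tr_Sigma R n) (Sigma_mulmx_tr R n) df_space_stable.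
have /sub_df_spaceP vS : O *m v = 0 /\ O *m J *m v = 0 by [].
have l_gt0 : (0 < l)%N.
  have : (0 < \rank v^T)%N by rewrite lt0n mxrank_eq0 trmx_eq0.
  by have := mxrankS (submx_trans vS df_T); have := rank_leq_row T; lia.
have := T_df; rewrite sub_df_space => /andP[/eqP OT /eqP OJT].
exists l; split => //; exists T^T; rewrite trmxK; split => //.
- move=> u; rewrite -sub_df_spaceP; split => [[w ->] | /submx_trans/(_ df_T)].
    by rewrite trmx_mul trmxK (submx_trans _ T_df) ?submxMl.
  by case/submxP => D uDT; exists D^T; rewrite -trmx_mul -uDT trmxK.
split; rewrite ?trmxK //; last exact/tr_ctrb_mul_eq0_obs.
move=> j; rewrite -tr_row trmx_eq0; apply: contraTneq isT => Tj0.
have := row_unitmx_neq0 j (Sigma_unitmx R l).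
by rewrite -TJT -mulmxA row_mul Tj0 mul0mx eqxx.
Qed.

Lemma kernel_of_df_mode : has_DF_subsystem G C ->
  exists v : 'cV[R]_(2 * n), [/\ v != 0, O *m v = 0 & O *m J *m v = 0].
Proof.
case=> l [l_gt0 [T [T_col ctrbT OT _]]].
have j0 : 'I_(2 * l) by exists 0%N; rewrite muln_gt0.
have OJT : O *m J *m T = 0 by apply/tr_ctrb_mul_eq0_obs.
by exists (col j0 T); rewrite T_col colE !mulmxA ?OT ?OJT mul0mx.
Qed.

End DecoherenceFree.

Theorem theorem1 (R : realFieldType) (n m : nat) (hn : (0 < n)%N) (hm : (0 < m)%N)
  (G : 'M[R]_(2 * n)) (C : 'M[R]_(2 * m, 2 * n)) :
  G^T = G ->
  (has_DF_subsystem G C <->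
     exists v : 'cV[R]_(2 * n),
       [/\ v != 0, obs G C *m v = 0 & (obs G C *m Sigma R n) *m v = 0])
  /\
  ((exists v : 'cV[R]_(2 * n),
       [/\ v != 0, obs G C *m v = 0 & (obs G C *m Sigma R n) *m v = 0]) ->
   exists l : nat, (0 < l)%N /\
     exists T1 : 'M[R]_(2 * n, 2 * l),
       [/\ (forall v : 'cV[R]_(2 * n),
              (exists w : 'cV[R]_(2 * l), v = T1 *m w) <->
              (obs G C *m v = 0 /\ (obs G C *m Sigma R n) *m v = 0)),
           T1^T *m Sigma R n *m T1 = Sigma R l &
           is_DF_mode G C T1]).
Proof.
move=> G_sym.
split; last by case=> v [v_neq0 Ov OJv]; exact (df_mode_of_kernel G_sym v_neq0 Ov OJv).
split; first exact: kernel_of_df_mode.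
case=> v [v_neq0 Ov OJv].
have [l [l_gt0 [T1 [_ _ T1_DF]]]] := df_mode_of_kernel G_sym v_neq0 Ov OJv.
by exists l; split => //; exists T1.
Qed.
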